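(* In the two-parallel-path setting with the linear decision rule, suppose $l_v=0$ for all vertices, $m<n$, all initial pheromone levels are positive, $f_s(t)=f_s(0)+\alpha t$ and $b_d(t)=b_d(0)+\alpha t$ with $\alpha>0$ and $f_s(0),b_d(0)>0$, and the initial flows at vertices other than $s,d$ satisfy $f_v(0)\le f_s(0)$, $b_v(0)\le b_d(0)$. Let $T_1=\max_{(u,v)\in E}\log(p_{uv}(0)/(f_s(0)+b_d(0)))/\log(1/\delta)$. Then for every integer $t\ge L+\max(0,T_1)$, $$r_{\min}(t+L)\ \ge\ \left(1+\frac{\alpha(1-\delta)}{6\,(f_s(0)+b_d(0)+2\alpha L+2\alpha t)}\right)r_{\min}(t).$$
   Context: Model (linear decision rule). Directed graph $G=(V,E)$, source $s$, destination $d$, discrete time; pheromone $p_{uv}(t)$, forward flows $f_v(t)$, backward flows $b_v(t)$; leakages $l_v\in[0,1]$; decay $\delta\in(0,1)$; exogenous inputs $f_s(t),b_d(t)$. Edge flows: $f_{uv}(t)=f_u(t)p_{uv}(t)/\sum_{z:(u,z)\in E}p_{uz}(t)$, $b_{uv}(t)=b_v(t)p_{uv}(t)/\sum_{z:(z,v)\in E}p_{zv}(t)$ (at a vertex with a single outgoing, resp. incoming, edge the whole flow goes along it). Updates: $f_v(t+1)=(1-l_v)\sum_{z:(z,v)\in E}f_{zv}(t)$ for $v\neq s$, $b_u(t+1)=(1-l_u)\sum_{z:(u,z)\in E}b_{uz}(t)$ for $u\ne d$, $p_{uv}(t+1)=\delta(p_{uv}(t)+f_{uv}(t)+b_{uv}(t))$.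 Two parallel paths: $G$ is the union of directed paths $P_1,P_2$ from $s$ to $d$ sharing only $s,d$; $s_1,s_2$ are the successors of $s$ and $d_1,d_2$ the predecessors of $d$ on $P_1,P_2$; $m=\mathrm{len}(P_1)$, $n=\mathrm{len}(P_2)$ (numbers of edges), $L=\max(m,n)$. Potential: $r_{ss_1}(t)=p_{ss_1}(t)/p_{ss_2}(t)$, $r_{d_1d}(t)=p_{d_1d}(t)/p_{d_2d}(t)$, and for $t\ge L$, $r_{\min}(t)=\min\{r_{ss_1}(t-i),\,r_{d_1d}(t-i):0\le i\le L-1\}$. *)

From Stdlib Require Import Reals Lra Lia Arith List.
Open Scope R_scope.

(* Two parallel paths P1 (m edges) and P2 (n edges) from s to d.
   Path k has vertices indexed 0..len_k, vertex 0 = s, vertex len_k = d;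
   edge i (0 <= i < len_k) goes from vertex i to vertex i+1.
   Vertices 1..len_k-1 are the internal vertices of the path.
   State (all functions of time t : nat):
     p1 t i, p2 t j    : pheromone on edge i of P1 / edge j of P2
     f1 t i, f2 t j    : forward flow at internal vertex i of P1 / j of P2
     b1 t i, b2 t j    : backward flow at internal vertex i of P1 / j of P2
     fs t, bd t        : exogenous inputs f_s(t), b_d(t)
     l1 i, l2 j        : leakage at internal vertex i of P1 / j of P2. *)

Section Dyn.
Variables (m n : nat) (fs bd : nat -> R) (p1 p2 f1 f2 b1 b2 : nat -> nat -> R).

(* forward edge flow f_{uv}(t) on edge i of P1: at s the flow splits
   proportionally to pheromone, at an internal vertex all flow goes on. *)
Definition fwd1 (t i : nat) : R :=
  if (i =? 0)%nat then fs t * p1 t 0 / (p1 t 0 + p2 t 0) else f1 t i.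
Definition fwd2 (t j : nat) : R :=
  if (j =? 0)%nat then fs t * p2 t 0 / (p1 t 0 + p2 t 0) else f2 t j.
(* backward edge flow b_{uv}(t) on edge i of P1: at d it splits among the
   two incoming edges, at an internal vertex the whole flow goes back. *)
Definition bwd1 (t i : nat) : R :=
  if (i =? m - 1)%nat then bd t * p1 t (m - 1) / (p1 t (m - 1) + p2 t (n - 1))
  else b1 t (i + 1).
Definition bwd2 (t j : nat) : R :=
  if (j =? n - 1)%nat then bd t * p2 t (n - 1) / (p1 t (m - 1) + p2 t (n - 1))
  else b2 t (j + 1).
End Dyn.

Definition two_path_dynamics (m n : nat) (delta : R) (l1 l2 : nat -> R)
  (fs bd : nat -> R) (p1 p2 f1 f2 b1 b2 : nat -> nat -> R) : Prop :=
  forall t : nat,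
    (forall i, (1 <= i <= m - 1)%nat ->
       f1 (S t) i = (1 - l1 i) * fwd1 fs p1 p2 f1 t (i - 1) /\
       b1 (S t) i = (1 - l1 i) * bwd1 m n bd p1 p2 b1 t i) /\
    (forall j, (1 <= j <= n - 1)%nat ->
       f2 (S t) j = (1 - l2 j) * fwd2 fs p1 p2 f2 t (j - 1) /\
       b2 (S t) j = (1 - l2 j) * bwd2 m n bd p1 p2 b2 t j) /\
    (forall i, (i < m)%nat ->
       p1 (S t) i = delta * (p1 t i + fwd1 fs p1 p2 f1 t i + bwd1 m n bd p1 p2 b1 t i)) /\
    (forall j, (j < n)%nat ->
       p2 (S t) j = delta * (p2 t j + fwd2 fs p1 p2 f2 t j + bwd2 m n bd p1 p2 b2 t j)).

Definition r_ss1 (p1 p2 : nat -> nat -> R) (t : nat) : R := p1 t 0%nat / p2 t 0%nat.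
Definition r_d1d (m n : nat) (p1 p2 : nat -> nat -> R) (t : nat) : R :=
  p1 t (m - 1)%nat / p2 t (n - 1)%nat.

Fixpoint min_upto (g : nat -> R) (k : nat) : R :=
  match k with
  | O => g O
  | S k' => Rmin (g (S k')) (min_upto g k')
  end.

(* r_min(t) = min { r_ss1(t-i), r_d1d(t-i) : 0 <= i <= L-1 }, L = max m n
   (meaningful for t >= L). *)
Definition r_min (m n : nat) (p1 p2 : nat -> nat -> R) (t : nat) : R :=
  min_upto (fun i => Rmin (r_ss1 p1 p2 (t - i)) (r_d1d m n p1 p2 (t - i)))
           (Nat.max m n - 1).

Definition T1_val (m n : nat) (delta : R) (p1 p2 : nat -> nat -> R) (c : R) : R :=
  let g := fun x => ln (x / c) / ln (1 / delta) in
  fold_right Rmax (g (p1 O O))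
    (map (fun i => g (p1 O i)) (seq 0 m) ++ map (fun j => g (p2 O j)) (seq 0 n)).

(* Let rho = r_min(u) bound from below the ratios p1/p2 on the edges at
   s and at d during the last L = n steps.  Without leakage, a flow entering
   a path reaches its far end unchanged after (length - 1) steps, so the
   backward flow arriving now at s on path 1 was split at d m - 1 steps ago,
   and that on path 2 n - 1 > m - 1 steps ago; both splits favoured path 1 by
   a ratio >= rho, and the input grew in between by at least alpha.  An
   elementary estimate (split_update_ratio) turns this into
   r(u+1) >= rho + rho alpha / S(u), S(u) the pheromone load on the two edges;
   the same holds at d with the forward flows.  After the threshold T1 the
   initial pheromone has evaporated, so S(u) <= 4K/(1 - delta) with
   K = f_s(0) + b_d(0) + 2 alpha (L + t), giving a gain factor
   1 + alpha (1 - delta)/(6K) for every new potential.  A lemma on sliding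
   window minima (window_min_growth) then lifts this to r_min(t + L). *)

From Stdlib Require Import Reals Lra Lia List.
Open Scope R_scope.

Lemma split_share_bounds (a p q : R) :
  0 <= a -> 0 < p -> 0 < q -> 0 <= a * p / (p + q) <= a.
Proof.
  intros Ha Hp Hq. split.
  - apply Rle_mult_inv_pos; [apply Rmult_le_pos|]; lra.
  - apply Rmult_le_reg_r with (p + q); [lra|].
    unfold Rdiv; rewrite Rmult_assoc, Rinv_l by lra. nra.
Qed.

Lemma share_lower (rho b q1 q2 : R) :
  0 < rho -> 0 <= b -> 0 < q1 -> 0 < q2 -> rho * q2 <= q1 ->
  rho * b <= (1 + rho) * (b * q1 / (q1 + q2)).
Proof.
  intros Hr Hb Hq1 Hq2 Hq.
  replace ((1 + rho) * (b * q1 / (q1 + q2)))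
    with (rho * b + b * (q1 - rho * q2) / (q1 + q2)) by (field; lra).
  assert (0 <= b * (q1 - rho * q2) / (q1 + q2))
    by (apply Rle_mult_inv_pos; [apply Rmult_le_pos|]; lra).
  lra.
Qed.

Lemma share_upper (rho b q1 q2 : R) :
  0 < rho -> 0 <= b -> 0 < q1 -> 0 < q2 -> rho * q2 <= q1 ->
  (1 + rho) * (b * q2 / (q1 + q2)) <= b.
Proof.
  intros Hr Hb Hq1 Hq2 Hq.
  replace ((1 + rho) * (b * q2 / (q1 + q2)))
    with (b - b * (q1 - rho * q2) / (q1 + q2)) by (field; lra).
  assert (0 <= b * (q1 - rho * q2) / (q1 + q2))
    by (apply Rle_mult_inv_pos; [apply Rmult_le_pos|]; lra).
  lra.
Qed.

Lemma ratio_lower (rho x y : R) : 0 < y -> rho <= x / y -> rho * y <= x.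
Proof.
  intros Hy H. apply Rmult_le_compat_r with (r := y) in H; [|lra].
  replace (x / y * y) with x in H by (field; lra). exact H.
Qed.

Lemma ratio_increment (rho al P1 P2 X1 X2 : R) :
  0 < rho -> 0 <= al -> 0 < P2 -> 0 <= X2 -> rho * P2 <= P1 ->
  rho * al <= (1 + rho) * (X1 - rho * X2) ->
  rho + rho * al / ((P1 + X1) + (P2 + X2)) <= (P1 + X1) / (P2 + X2).
Proof.
  intros Hr Hal HP2 HX2 HP Hex.
  set (N := P1 + X1). set (M := P2 + X2).
  assert (HM : 0 < M) by (unfold M; lra).
  assert (0 <= (1 + rho) * (P1 - rho * P2)) by (apply Rmult_le_pos; lra).
  assert (Hgap : rho * al <= (1 + rho) * (N - rho * M))
    by (unfold N, M; lra).
  assert (Hexcess : 0 <= N - rho * M).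
  { apply Rmult_le_reg_l with (1 + rho); [lra|].
    assert (0 <= rho * al) by (apply Rmult_le_pos; lra). lra. }
  assert (HNM : 0 < N + M) by nra.
  apply Rmult_le_reg_r with (M * (N + M)); [nra|].
  replace ((rho + rho * al / (N + M)) * (M * (N + M)))
    with (rho * M * (N + M) + rho * al * M) by (field; lra).
  replace (N / M * (M * (N + M))) with (N * (N + M)) by (field; lra).
  assert (rho * al * M <= (1 + rho) * M * (N - rho * M)) by nra.
  nra.
Qed.

(* One update of two competing edges: each edge keeps its pheromone (x, y),
   receives its proportional share of a common input a, and receives a flow
   from the opposite direction that was split earlier with ratio at least
   rho (shares q and r); the flow reaching the first edge is larger by al.
   If x >= rho y, the ratio of the new levels exceeds rho by rho al/(N+M). *)
Lemma split_update_ratio (rho al d a x y b1 q1 q2 b2 r1 r2 N M : R) :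
  0 < rho -> 0 <= al -> 0 < d -> 0 <= a -> 0 < x -> 0 < y -> rho * y <= x ->
  0 < q1 -> 0 < q2 -> rho * q2 <= q1 -> 0 < r1 -> 0 < r2 -> rho * r2 <= r1 ->
  0 <= b2 -> b2 + al <= b1 ->
  N = x + a * x / (x + y) + b1 * q1 / (q1 + q2) ->
  M = y + a * y / (x + y) + b2 * r2 / (r1 + r2) ->
  rho + rho * al / (N + M) <= (d * N) / (d * M).
Proof.
  intros Hr Hal Hd Ha Hx Hy Hxy Hq1 Hq2 Hq Hr1 Hr2 Hrr Hb2 Hb -> ->.
  set (P1 := x + a * x / (x + y)). set (P2 := y + a * y / (x + y)).
  set (X1 := b1 * q1 / (q1 + q2)). set (X2 := b2 * r2 / (r1 + r2)).
  assert (HP2 : 0 < P2).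
  { assert (0 <= a * y / (x + y))
      by (apply Rle_mult_inv_pos; [apply Rmult_le_pos|]; lra).
    unfold P2; lra. }
  assert (HX2 : 0 <= X2)
    by (apply Rle_mult_inv_pos; [apply Rmult_le_pos|]; lra).
  assert (HP : rho * P2 <= P1).
  { unfold P1, P2.
    replace (x + a * x / (x + y)) with (x * (1 + a / (x + y))) by (field; lra).
    replace (y + a * y / (x + y)) with (y * (1 + a / (x + y))) by (field; lra).
    assert (0 <= a / (x + y)) by (apply Rle_mult_inv_pos; lra).
    rewrite <- Rmult_assoc; apply Rmult_le_compat_r; lra. }
  assert (H1 : rho * b1 <= (1 + rho) * X1) by (apply share_lower; lra).
  assert (H2 : (1 + rho) * X2 <= b2) by (apply share_upper; lra).
  replace (d * (P1 + X1) / (d * (P2 + X2))) with ((P1 + X1) / (P2 + X2))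
    by (field; lra).
  apply ratio_increment; try lra.
  assert (rho * ((1 + rho) * X2) <= rho * b2) by (apply Rmult_le_compat_l; lra).
  nra.
Qed.

Lemma gain_lower_bound (rho al S K d : R) :
  0 < rho -> 0 < al -> 0 < S -> 0 < K -> 0 < d < 1 -> S <= 4 * K / (1 - d) ->
  (1 + al * (1 - d) / (6 * K)) * rho <= rho + rho * al / S.
Proof.
  intros Hr Ha HS HK Hd HSK.
  assert (HS' : S * (1 - d) <= 4 * K).
  { apply Rmult_le_compat_r with (r := 1 - d) in HSK; [|lra].
    replace (4 * K / (1 - d) * (1 - d)) with (4 * K) in HSK by (field; lra).
    exact HSK. }
  assert (Hfrac : al * (1 - d) / (6 * K) <= al / S).
  { apply Rmult_le_reg_r with (6 * K * S); [nra|].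
    replace (al * (1 - d) / (6 * K) * (6 * K * S)) with (al * (S * (1 - d)))
      by (field; lra).
    replace (al / S * (6 * K * S)) with (al * (6 * K)) by (field; lra).
    apply Rmult_le_compat_l; lra. }
  replace (rho + rho * al / S) with ((1 + al / S) * rho) by (field; lra).
  apply Rmult_le_compat_r; lra.
Qed.

Lemma geometric_load_bound (d C : R) (E Q : nat -> R) (T : nat) :
  0 < d < 1 -> 0 <= C ->
  (forall u, E (S u) = d * Q u) ->
  (forall u, (u <= T)%nat -> Q u <= E u + C) ->
  forall u, (u <= T)%nat -> Q u <= d ^ u * E O + C / (1 - d).
Proof.
  intros Hd HC HE HQ u. induction u as [|u IH]; intros Hu.
  - assert (C <= C / (1 - d)).
    { apply Rmult_le_reg_r with (1 - d); [lra|].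
      replace (C / (1 - d) * (1 - d)) with C by (field; lra). nra. }
    specialize (HQ O Hu). simpl. lra.
  - specialize (IH ltac:(lia)). specialize (HQ (S u) Hu). rewrite HE in HQ.
    replace (d ^ S u * E O + C / (1 - d))
      with (d * (d ^ u * E O + C / (1 - d)) + C) by (simpl; field; lra).
    nra.
Qed.

Lemma initial_level_decay (p c d : R) (k u : nat) :
  0 < p -> 0 < c -> 0 < d < 1 ->
  ln (p / c) / ln (1 / d) <= INR k -> (k <= u)%nat -> d ^ u * p <= c.
Proof.
  intros Hp Hc Hd Hk Hku.
  assert (Hlnd : ln d < 0) by (rewrite <- ln_1; apply ln_increasing; lra).
  assert (Hinv : ln (1 / d) = - ln d)
    by (unfold Rdiv; rewrite Rmult_1_l; apply ln_Rinv; lra).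
  assert (Hlog : ln p - ln c <= - (INR k * ln d)).
  { rewrite Hinv in Hk.
    unfold Rdiv in Hk; rewrite ln_mult, ln_Rinv in Hk
      by (try apply Rinv_0_lt_compat; lra).
    apply Rmult_le_compat_r with (r := - ln d) in Hk; [|lra].
    rewrite Rmult_assoc, Rinv_l in Hk by lra. lra. }
  assert (Hdk : d ^ k * p <= c).
  { assert (Hpos : 0 < d ^ k * p) by (apply Rmult_lt_0_compat; [apply pow_lt|]; lra).
    destruct (Rle_or_lt (d ^ k * p) c) as [Hle|Hlt]; [exact Hle|].
    apply ln_increasing in Hlt; [|exact Hc].
    rewrite ln_mult, ln_pow in Hlt by (try apply pow_lt; lra). lra. }
  replace u with ((u - k) + k)%nat by lia. rewrite pow_add, Rmult_assoc.
  assert (d ^ (u - k) <= 1) by (rewrite <- (pow1 (u - k)); apply pow_incr; lra).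
  assert (0 <= d ^ (u - k)) by (apply pow_le; lra).
  assert (0 < d ^ k * p) by (apply Rmult_lt_0_compat; [apply pow_lt|]; lra).
  nra.
Qed.

Lemma linear_input_pos (al : R) (g : nat -> R) :
  0 <= al -> 0 < g O -> (forall t, g t = g O + al * INR t) -> forall u, 0 < g u.
Proof.
  intros Hal Hg0 Hg u. rewrite Hg.
  assert (0 <= al * INR u) by (apply Rmult_le_pos; [lra | apply pos_INR]). lra.
Qed.

Lemma linear_input_gap (al : R) (g : nat -> R) :
  0 <= al -> (forall t, g t = g O + al * INR t) ->
  forall v w, (v < w)%nat -> g v + al <= g w.
Proof.
  intros Hal Hg v w Hvw. rewrite (Hg v), (Hg w).
  assert (INR v + 1 <= INR w) by (rewrite <- S_INR; apply le_INR; lia).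
  assert (al * (INR v + 1) <= al * INR w) by (apply Rmult_le_compat_l; lra).
  lra.
Qed.

Lemma linear_input_mono (al : R) (g : nat -> R) :
  0 <= al -> (forall t, g t = g O + al * INR t) -> forall u, g u <= g (S u).
Proof.
  intros Hal Hg u. pose proof (linear_input_gap al g Hal Hg u (S u) (Nat.lt_succ_diag_r u)). lra.
Qed.

Lemma min_upto_le (g : nat -> R) (k i : nat) : (i <= k)%nat -> min_upto g k <= g i.
Proof.
  induction k as [|k IH]; intros Hi; simpl.
  - replace i with O by lia. lra.
  - destruct (Nat.eq_dec i (S k)) as [->|Hne]; [apply Rmin_l|].
    eapply Rle_trans; [apply Rmin_r | apply IH; lia].
Qed.

Lemma min_upto_glb (g : nat -> R) (k : nat) (rho : R) :
  (forall i, (i <= k)%nat -> rho <= g i) -> rho <= min_upto g k.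
Proof.
  induction k as [|k IH]; intros H; simpl; [apply H; lia|].
  apply Rmin_glb; [apply H; lia | apply IH; intros; apply H; lia].
Qed.

Lemma min_upto_pos (g : nat -> R) (k : nat) :
  (forall i, (i <= k)%nat -> 0 < g i) -> 0 < min_upto g k.
Proof.
  induction k as [|k IH]; intros H; simpl; [apply H; lia|].
  apply Rmin_pos; [apply H; lia | apply IH; intros; apply H; lia].
Qed.

(* The window
   minimum is first shown nondecreasing on t..t+k+1. *)
Lemma window_min_growth (g : nat -> R) (k t : nat) (kap : R) :
  0 <= kap -> (forall w, 0 <= g w) ->
  (forall u, (t <= u <= t + k)%nat ->
     (1 + kap) * min_upto (fun i => g (u - i)%nat) k <= g (S u)) ->
  (1 + kap) * min_upto (fun i => g (t - i)%nat) k
    <= min_upto (fun i => g (t + S k - i)%nat) k.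
Proof.
  intros Hkap Hg Hnew.
  set (W u := min_upto (fun i => g (u - i)%nat) k).
  assert (HW0 : forall u, 0 <= W u) by (intro u; apply min_upto_glb; auto).
  assert (Hmono : forall u, (t <= u <= t + k)%nat -> W u <= W (S u)).
  { intros u Hu. apply min_upto_glb. intros [|i] Hi.
    - rewrite Nat.sub_0_r. specialize (Hnew u Hu). specialize (HW0 u).
      fold (W u) in Hnew. nra.
    - replace (S u - S i)%nat with (u - i)%nat by lia.
      apply (min_upto_le (fun i => g (u - i)%nat)); lia. }
  assert (Hfrom_t : forall j, (j <= k)%nat -> W t <= W (t + j)%nat).
  { induction j as [|j IH]; intros Hj; [rewrite Nat.add_0_r; lra|].
    replace (t + S j)%nat with (S (t + j)) by lia.
    eapply Rle_trans; [apply IH; lia | apply Hmono; lia]. }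
  apply min_upto_glb. intros i Hi.
  replace (t + S k - i)%nat with (S (t + (k - i))) by lia.
  eapply Rle_trans; [| apply Hnew; lia].
  apply Rmult_le_compat_l; [lra | apply Hfrom_t; lia].
Qed.

Lemma fold_Rmax_ge (l : list R) (d x : R) : In x l -> x <= fold_right Rmax d l.
Proof.
  induction l as [|y l IH]; simpl; [tauto|].
  intros [->|Hin]; [apply Rmax_l|].
  eapply Rle_trans; [apply IH, Hin | apply Rmax_r].
Qed.

Lemma T1_val_ge_edge1 (m n : nat) (delta c : R) (p1 p2 : nat -> nat -> R) (i : nat) :
  (i < m)%nat -> ln (p1 O i / c) / ln (1 / delta) <= T1_val m n delta p1 p2 c.
Proof.
  intros Hi. apply fold_Rmax_ge, in_or_app; left.
  apply in_map_iff. exists i. split; [reflexivity | apply in_seq; lia].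
Qed.

Lemma T1_val_ge_edge2 (m n : nat) (delta c : R) (p1 p2 : nat -> nat -> R) (j : nat) :
  (j < n)%nat -> ln (p2 O j / c) / ln (1 / delta) <= T1_val m n delta p1 p2 c.
Proof.
  intros Hj. apply fold_Rmax_ge, in_or_app; right.
  apply in_map_iff. exists j. split; [reflexivity | apply in_seq; lia].
Qed.

Lemma fwd_swap (fs : nat -> R) (p1 p2 f : nat -> nat -> R) (t j : nat) :
  fwd2 fs p1 p2 f t j = fwd1 fs p2 p1 f t j.
Proof. unfold fwd1, fwd2. rewrite Rplus_comm. reflexivity. Qed.

Lemma bwd_swap (m n : nat) (bd : nat -> R) (p1 p2 b : nat -> nat -> R) (t j : nat) :
  bwd2 m n bd p1 p2 b t j = bwd1 n m bd p2 p1 b t j.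
Proof. unfold bwd1, bwd2. rewrite Rplus_comm. reflexivity. Qed.

Lemma two_path_dynamics_swap (m n : nat) (delta : R) (l1 l2 fs bd : nat -> R)
  (p1 p2 f1 f2 b1 b2 : nat -> nat -> R) :
  two_path_dynamics m n delta l1 l2 fs bd p1 p2 f1 f2 b1 b2 ->
  two_path_dynamics n m delta l2 l1 fs bd p2 p1 f2 f1 b2 b1.
Proof.
  intros Hdyn t. destruct (Hdyn t) as (H1 & H2 & H3 & H4).
  setoid_rewrite fwd_swap in H2; setoid_rewrite bwd_swap in H2.
  setoid_rewrite fwd_swap in H4; setoid_rewrite bwd_swap in H4.
  setoid_rewrite fwd_swap; setoid_rewrite bwd_swap.
  repeat split; intros; first [apply H1 | apply H2 | apply H3 | apply H4]; assumption.
Qed.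

Definition path_ok (len : nat) (fs bd : nat -> R) (p f b : nat -> nat -> R) (u : nat) : Prop :=
  (forall i, (i < len)%nat -> 0 < p u i) /\
  (forall i, (1 <= i <= len - 1)%nat -> 0 <= f u i <= fs u /\ 0 <= b u i <= bd u).

Section PathOne.
(* Facts about path 1 of a lossless system; path 2 follows by symmetry. *)
Variables (m n : nat) (delta : R) (l1 l2 fs bd : nat -> R)
  (p1 p2 f1 f2 b1 b2 : nat -> nat -> R).
Hypothesis Hdyn : two_path_dynamics m n delta l1 l2 fs bd p1 p2 f1 f2 b1 b2.
Hypothesis Hl1 : forall i, (1 <= i <= m - 1)%nat -> l1 i = 0.

Local Notation F1 := (fwd1 fs p1 p2 f1).
Local Notation B1 := (bwd1 m n bd p1 p2 b1).

Lemma f1_transport (u i : nat) : (1 <= i <= m - 1)%nat -> f1 (S u) i = F1 u (i - 1).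
Proof. intros Hi. rewrite (proj1 (proj1 (Hdyn u) i Hi)), Hl1 by exact Hi. ring. Qed.

Lemma b1_transport (u i : nat) : (1 <= i <= m - 1)%nat -> b1 (S u) i = B1 u i.
Proof. intros Hi. rewrite (proj2 (proj1 (Hdyn u) i Hi)), Hl1 by exact Hi. ring. Qed.

Lemma p1_update (u i : nat) : (i < m)%nat -> p1 (S u) i = delta * (p1 u i + F1 u i + B1 u i).
Proof. intros Hi. exact (proj1 (proj2 (proj2 (Hdyn u))) i Hi). Qed.

(* Without leakage a flow travels unchanged along the path, one edge per
   step: the forward flow on edge k at time u + k left s at time u, and the
   backward flow on edge m-1-k at time u + k left d at time u. *)
Lemma fwd1_delay (k u : nat) : (k <= m - 1)%nat -> F1 (u + k) k = F1 u 0.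
Proof.
  revert u. induction k as [|k IH]; intros u Hk; [now rewrite Nat.add_0_r|].
  unfold fwd1 at 1; simpl (S k =? 0)%nat; cbv iota.
  rewrite Nat.add_succ_r, f1_transport by lia.
  replace (S k - 1)%nat with k by lia. apply IH; lia.
Qed.

Lemma bwd1_delay (k u : nat) : (k <= m - 1)%nat -> B1 (u + k) (m - 1 - k) = B1 u (m - 1).
Proof.
  revert u. induction k as [|k IH]; intros u Hk; [now rewrite Nat.add_0_r, Nat.sub_0_r|].
  unfold bwd1 at 1. destruct (Nat.eqb_spec (m - 1 - S k) (m - 1)) as [E|_]; [lia|].
  rewrite Nat.add_succ_r, b1_transport by lia.
  replace (m - 1 - S k + 1)%nat with (m - 1 - k)%nat by lia. apply IH; lia.
Qed.

Lemma fwd1_arrival (u : nat) : (m - 1 <= u)%nat ->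
  F1 u (m - 1) = fs (u - (m - 1)) * p1 (u - (m - 1)) O
                 / (p1 (u - (m - 1)) O + p2 (u - (m - 1)) O).
Proof.
  intros Hu. pose proof (fwd1_delay (m - 1) (u - (m - 1)) (le_n _)) as E.
  rewrite Nat.sub_add in E by exact Hu. rewrite E. reflexivity.
Qed.

Lemma bwd1_arrival (u : nat) : (m - 1 <= u)%nat ->
  B1 u O = bd (u - (m - 1)) * p1 (u - (m - 1)) (m - 1)
           / (p1 (u - (m - 1)) (m - 1) + p2 (u - (m - 1)) (n - 1)).
Proof.
  intros Hu. pose proof (bwd1_delay (m - 1) (u - (m - 1)) (le_n _)) as E.
  rewrite Nat.sub_add, Nat.sub_diag in E by exact Hu. rewrite E.
  unfold bwd1. rewrite Nat.eqb_refl. reflexivity.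
Qed.

Hypothesis Hn : (1 <= n)%nat.
Hypothesis Hdelta : 0 < delta.
Hypothesis Hfs_nonneg : forall u, 0 <= fs u.
Hypothesis Hbd_nonneg : forall u, 0 <= bd u.
Hypothesis Hfs_mono : forall u, fs u <= fs (S u).
Hypothesis Hbd_mono : forall u, bd u <= bd (S u).

Lemma fwd1_bounds (u i : nat) :
  path_ok m fs bd p1 f1 b1 u -> path_ok n fs bd p2 f2 b2 u ->
  (i < m)%nat -> 0 <= F1 u i <= fs u.
Proof.
  intros [Hp1 Hf1] [Hp2 _] Hi. unfold fwd1.
  destruct (Nat.eqb_spec i 0) as [->|Hi0].
  - apply split_share_bounds; [apply Hfs_nonneg | apply Hp1 | apply Hp2]; lia.
  - apply Hf1; lia.
Qed.

Lemma bwd1_bounds (u i : nat) :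
  path_ok m fs bd p1 f1 b1 u -> path_ok n fs bd p2 f2 b2 u ->
  (i < m)%nat -> 0 <= B1 u i <= bd u.
Proof.
  intros [Hp1 Hb1] [Hp2 _] Hi. unfold bwd1.
  destruct (Nat.eqb_spec i (m - 1)) as [->|Hi1].
  - apply split_share_bounds; [apply Hbd_nonneg | apply Hp1 | apply Hp2]; lia.
  - apply Hb1; lia.
Qed.

Lemma path_ok_step (u : nat) :
  path_ok m fs bd p1 f1 b1 u -> path_ok n fs bd p2 f2 b2 u ->
  path_ok m fs bd p1 f1 b1 (S u).
Proof.
  intros Hok1 Hok2. split.
  - intros i Hi. rewrite p1_update by exact Hi.
    pose proof (fwd1_bounds u i Hok1 Hok2 Hi).
    pose proof (bwd1_bounds u i Hok1 Hok2 Hi).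
    pose proof (proj1 Hok1 i Hi).
    apply Rmult_lt_0_compat; lra.
  - intros i Hi. rewrite f1_transport, b1_transport by exact Hi.
    pose proof (fwd1_bounds u (i - 1) Hok1 Hok2 ltac:(lia)).
    pose proof (bwd1_bounds u i Hok1 Hok2 ltac:(lia)).
    pose proof (Hfs_mono u). pose proof (Hbd_mono u). lra.
Qed.

End PathOne.


Section PathTwo.
Variables (m n : nat) (delta : R) (l1 l2 fs bd : nat -> R)
  (p1 p2 f1 f2 b1 b2 : nat -> nat -> R).
Hypothesis Hdyn : two_path_dynamics m n delta l1 l2 fs bd p1 p2 f1 f2 b1 b2.
Hypothesis Hl2 : forall j, (1 <= j <= n - 1)%nat -> l2 j = 0.

Local Notation F2 := (fwd2 fs p1 p2 f2).
Local Notation B2 := (bwd2 m n bd p1 p2 b2).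

Let Hdyn_swap := two_path_dynamics_swap m n delta l1 l2 fs bd p1 p2 f1 f2 b1 b2 Hdyn.

Lemma p2_update (u j : nat) : (j < n)%nat -> p2 (S u) j = delta * (p2 u j + F2 u j + B2 u j).
Proof. intros Hj. exact (proj2 (proj2 (proj2 (Hdyn u))) j Hj). Qed.

Lemma fwd2_arrival (u : nat) : (n - 1 <= u)%nat ->
  F2 u (n - 1) = fs (u - (n - 1)) * p2 (u - (n - 1)) O
                 / (p1 (u - (n - 1)) O + p2 (u - (n - 1)) O).
Proof.
  intros Hu. rewrite fwd_swap, (fwd1_arrival n m delta l2 l1 fs bd p2 p1 f2 f1 b2 b1
    Hdyn_swap Hl2 u Hu), Rplus_comm. reflexivity.
Qed.

Lemma bwd2_arrival (u : nat) : (n - 1 <= u)%nat ->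
  B2 u O = bd (u - (n - 1)) * p2 (u - (n - 1)) (n - 1)
           / (p1 (u - (n - 1)) (m - 1) + p2 (u - (n - 1)) (n - 1)).
Proof.
  intros Hu. rewrite bwd_swap, (bwd1_arrival n m delta l2 l1 fs bd p2 p1 f2 f1 b2 b1
    Hdyn_swap Hl2 u Hu), Rplus_comm. reflexivity.
Qed.

Hypothesis Hm : (1 <= m)%nat.
Hypothesis Hfs_nonneg : forall u, 0 <= fs u.
Hypothesis Hbd_nonneg : forall u, 0 <= bd u.

Lemma fwd2_bounds (u j : nat) :
  path_ok m fs bd p1 f1 b1 u -> path_ok n fs bd p2 f2 b2 u ->
  (j < n)%nat -> 0 <= F2 u j <= fs u.
Proof.
  intros Hok1 Hok2 Hj. rewrite fwd_swap.
  exact (fwd1_bounds n m fs bd p2 p1 f2 f1 b2 b1 Hm Hfs_nonneg u j Hok2 Hok1 Hj).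
Qed.

Lemma bwd2_bounds (u j : nat) :
  path_ok m fs bd p1 f1 b1 u -> path_ok n fs bd p2 f2 b2 u ->
  (j < n)%nat -> 0 <= B2 u j <= bd u.
Proof.
  intros Hok1 Hok2 Hj. rewrite bwd_swap.
  exact (bwd1_bounds n m fs bd p2 p1 f2 f1 b2 b1 Hm Hbd_nonneg u j Hok2 Hok1 Hj).
Qed.

Hypothesis Hdelta : 0 < delta.
Hypothesis Hfs_mono : forall u, fs u <= fs (S u).
Hypothesis Hbd_mono : forall u, bd u <= bd (S u).

Lemma path2_ok_step (u : nat) :
  path_ok m fs bd p1 f1 b1 u -> path_ok n fs bd p2 f2 b2 u ->
  path_ok n fs bd p2 f2 b2 (S u).
Proof.
  intros Hok1 Hok2.
  exact (path_ok_step n m delta l2 l1 fs bd p2 p1 f2 f1 b2 b1 Hdyn_swap Hl2 Hm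
           Hdelta Hfs_nonneg Hbd_nonneg Hfs_mono Hbd_mono u Hok2 Hok1).
Qed.

End PathTwo.

Section LinearInputs.
Variables (m n : nat) (delta alpha : R) (l1 l2 fs bd : nat -> R)
  (p1 p2 f1 f2 b1 b2 : nat -> nat -> R).
Hypothesis Hm : (1 <= m)%nat.
Hypothesis Hmn : (m < n)%nat.
Hypothesis Hdelta : 0 < delta < 1.
Hypothesis Hdyn : two_path_dynamics m n delta l1 l2 fs bd p1 p2 f1 f2 b1 b2.
Hypothesis Hl1 : forall i, (1 <= i <= m - 1)%nat -> l1 i = 0.
Hypothesis Hl2 : forall j, (1 <= j <= n - 1)%nat -> l2 j = 0.
Hypothesis Hp1 : forall i, (i < m)%nat -> 0 < p1 O i.
Hypothesis Hp2 : forall j, (j < n)%nat -> 0 < p2 O j.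
Hypothesis Halpha : 0 < alpha.
Hypothesis Hfs0 : 0 < fs O.
Hypothesis Hbd0 : 0 < bd O.
Hypothesis Hfs : forall t, fs t = fs O + alpha * INR t.
Hypothesis Hbd : forall t, bd t = bd O + alpha * INR t.
Hypothesis Hf1 : forall i, (1 <= i <= m - 1)%nat -> 0 <= f1 O i <= fs O.
Hypothesis Hb1 : forall i, (1 <= i <= m - 1)%nat -> 0 <= b1 O i <= bd O.
Hypothesis Hf2 : forall j, (1 <= j <= n - 1)%nat -> 0 <= f2 O j <= fs O.
Hypothesis Hb2 : forall j, (1 <= j <= n - 1)%nat -> 0 <= b2 O j <= bd O.

Local Notation F1 := (fwd1 fs p1 p2 f1).
Local Notation B1 := (bwd1 m n bd p1 p2 b1).
Local Notation F2 := (fwd2 fs p1 p2 f2).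
Local Notation B2 := (bwd2 m n bd p1 p2 b2).

Let Hn : (1 <= n)%nat := Nat.le_trans _ _ _ Hm (Nat.lt_le_incl _ _ Hmn).
Let Hfs_pos : forall u, 0 < fs u := linear_input_pos alpha fs (Rlt_le _ _ Halpha) Hfs0 Hfs.
Let Hbd_pos : forall u, 0 < bd u := linear_input_pos alpha bd (Rlt_le _ _ Halpha) Hbd0 Hbd.
Let Hfs_nonneg : forall u, 0 <= fs u := fun u => Rlt_le _ _ (Hfs_pos u).
Let Hbd_nonneg : forall u, 0 <= bd u := fun u => Rlt_le _ _ (Hbd_pos u).

Lemma state_ok (u : nat) :
  path_ok m fs bd p1 f1 b1 u /\ path_ok n fs bd p2 f2 b2 u.
Proof.
  pose proof (linear_input_mono alpha fs (Rlt_le _ _ Halpha) Hfs) as Hfs_mono.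
  pose proof (linear_input_mono alpha bd (Rlt_le _ _ Halpha) Hbd) as Hbd_mono.
  induction u as [|u [Hok1 Hok2]].
  - split; split; first [exact Hp1 | exact Hp2 | idtac].
    + intros i Hi. split; [apply Hf1 | apply Hb1]; exact Hi.
    + intros j Hj. split; [apply Hf2 | apply Hb2]; exact Hj.
  - split.
    + exact (path_ok_step m n delta l1 l2 fs bd p1 p2 f1 f2 b1 b2 Hdyn Hl1 Hn
               (proj1 Hdelta) Hfs_nonneg Hbd_nonneg Hfs_mono Hbd_mono u Hok1 Hok2).
    + exact (path2_ok_step m n delta l1 l2 fs bd p1 p2 f1 f2 b1 b2 Hdyn Hl2 Hm
               Hfs_nonneg Hbd_nonneg (proj1 Hdelta) Hfs_mono Hbd_mono u Hok1 Hok2).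
Qed.

Lemma p1_pos (u i : nat) : (i < m)%nat -> 0 < p1 u i.
Proof. apply (proj1 (proj1 (state_ok u))). Qed.

Lemma p2_pos (u j : nat) : (j < n)%nat -> 0 < p2 u j.
Proof. apply (proj1 (proj2 (state_ok u))). Qed.

Definition pair_load (i j u : nat) : R :=
  (p1 u i + F1 u i + B1 u i) + (p2 u j + F2 u j + B2 u j).

Lemma pair_load_decay (i j u : nat) : (i < m)%nat -> (j < n)%nat ->
  p1 (S u) i + p2 (S u) j = delta * pair_load i j u.
Proof.
  intros Hi Hj. unfold pair_load.
  rewrite (p1_update m n delta l1 l2 fs bd p1 p2 f1 f2 b1 b2 Hdyn u i Hi),
          (p2_update m n delta l1 l2 fs bd p1 p2 f1 f2 b1 b2 Hdyn u j Hj).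
  ring.
Qed.

Lemma pair_load_bounds (i j u : nat) : (i < m)%nat -> (j < n)%nat ->
  0 < pair_load i j u <= p1 u i + p2 u j + 2 * (fs u + bd u).
Proof.
  intros Hi Hj. destruct (state_ok u) as [Hok1 Hok2]. unfold pair_load.
  pose proof (fwd1_bounds m n fs bd p1 p2 f1 f2 b1 b2 Hn Hfs_nonneg u i Hok1 Hok2 Hi).
  pose proof (bwd1_bounds m n fs bd p1 p2 f1 f2 b1 b2 Hn Hbd_nonneg u i Hok1 Hok2 Hi).
  pose proof (fwd2_bounds m n fs bd p1 p2 f1 f2 b1 b2 Hm Hfs_nonneg u j Hok1 Hok2 Hj).
  pose proof (bwd2_bounds m n fs bd p1 p2 f1 f2 b1 b2 Hm Hbd_nonneg u j Hok1 Hok2 Hj).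
  pose proof (p1_pos u i Hi). pose proof (p2_pos u j Hj). lra.
Qed.

(* Ratio growth at the source: the new ratio on the edges leaving s exceeds
   any common lower bound rho of the current ratio at s and of the ratios
   at d when the backward flows now arriving at s were split there (m - 1
   resp. n - 1 steps ago); the shorter path receives the later, larger
   backward input. *)
Lemma ratio_step_source (u : nat) (rho : R) :
  (n - 1 <= u)%nat -> 0 < rho -> rho <= r_ss1 p1 p2 u ->
  rho <= r_d1d m n p1 p2 (u - (m - 1)) -> rho <= r_d1d m n p1 p2 (u - (n - 1)) ->
  rho + rho * alpha / pair_load O O u <= r_ss1 p1 p2 (S u).
Proof.
  intros Hu Hr Hs Hd1 Hd2. unfold r_ss1, r_d1d in *.
  set (v1 := (u - (m - 1))%nat) in *. set (v2 := (u - (n - 1))%nat) in *.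
  rewrite (p1_update m n delta l1 l2 fs bd p1 p2 f1 f2 b1 b2 Hdyn u O),
          (p2_update m n delta l1 l2 fs bd p1 p2 f1 f2 b1 b2 Hdyn u O) by lia.
  apply (split_update_ratio rho alpha delta (fs u) (p1 u O) (p2 u O)
           (bd v1) (p1 v1 (m - 1)%nat) (p2 v1 (n - 1)%nat)
           (bd v2) (p1 v2 (m - 1)%nat) (p2 v2 (n - 1)%nat)).
  all: try solve [lra | apply Hfs_nonneg | apply Hbd_nonneg
                  | apply p1_pos; lia | apply p2_pos; lia
                  | apply ratio_lower; [apply p2_pos; lia | assumption]].
  - apply (linear_input_gap alpha bd (Rlt_le _ _ Halpha) Hbd). unfold v1, v2. lia.
  - rewrite (bwd1_arrival m n delta l1 l2 fs bd p1 p2 f1 f2 b1 b2 Hdyn Hl1) by lia.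
    reflexivity.
  - rewrite (bwd2_arrival m n delta l1 l2 fs bd p1 p2 f1 f2 b1 b2 Hdyn Hl2) by lia.
    reflexivity.
Qed.

Lemma ratio_step_dest (u : nat) (rho : R) :
  (n - 1 <= u)%nat -> 0 < rho -> rho <= r_d1d m n p1 p2 u ->
  rho <= r_ss1 p1 p2 (u - (m - 1)) -> rho <= r_ss1 p1 p2 (u - (n - 1)) ->
  rho + rho * alpha / pair_load (m - 1) (n - 1) u <= r_d1d m n p1 p2 (S u).
Proof.
  intros Hu Hr Hd Hs1 Hs2. unfold r_ss1, r_d1d in *.
  set (v1 := (u - (m - 1))%nat) in *. set (v2 := (u - (n - 1))%nat) in *.
  rewrite (p1_update m n delta l1 l2 fs bd p1 p2 f1 f2 b1 b2 Hdyn u (m - 1)),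
          (p2_update m n delta l1 l2 fs bd p1 p2 f1 f2 b1 b2 Hdyn u (n - 1)) by lia.
  apply (split_update_ratio rho alpha delta (bd u) (p1 u (m - 1)%nat) (p2 u (n - 1)%nat)
           (fs v1) (p1 v1 O) (p2 v1 O) (fs v2) (p1 v2 O) (p2 v2 O)).
  all: try solve [lra | apply Hfs_nonneg | apply Hbd_nonneg
                  | apply p1_pos; lia | apply p2_pos; lia
                  | apply ratio_lower; [apply p2_pos; lia | assumption]].
  - apply (linear_input_gap alpha fs (Rlt_le _ _ Halpha) Hfs). unfold v1, v2. lia.
  - rewrite (fwd1_arrival m n delta l1 l2 fs bd p1 p2 f1 f2 b1 b2 Hdyn Hl1) by lia.
    unfold bwd1. rewrite Nat.eqb_refl. unfold v1. ring.
  - rewrite (fwd2_arrival m n delta l1 l2 fs bd p1 p2 f1 f2 b1 b2 Hdyn Hl2) by lia.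
    unfold bwd2. rewrite Nat.eqb_refl. unfold v2. ring.
Qed.

Lemma potentials_pos (w : nat) : 0 < r_ss1 p1 p2 w /\ 0 < r_d1d m n p1 p2 w.
Proof.
  unfold r_ss1, r_d1d.
  split; apply Rdiv_lt_0_compat; first [apply p1_pos | apply p2_pos]; lia.
Qed.

Lemma r_min_le (w i : nat) : (i <= n - 1)%nat ->
  r_min m n p1 p2 w <= r_ss1 p1 p2 (w - i) /\ r_min m n p1 p2 w <= r_d1d m n p1 p2 (w - i).
Proof.
  intros Hi. unfold r_min. replace (Nat.max m n) with n by lia.
  pose proof (min_upto_le (fun i => Rmin (r_ss1 p1 p2 (w - i)) (r_d1d m n p1 p2 (w - i)))
                (n - 1) i Hi) as Hle.
  split; (eapply Rle_trans; [exact Hle | apply Rmin_l || apply Rmin_r]).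
Qed.

Lemma r_min_pos (w : nat) : 0 < r_min m n p1 p2 w.
Proof.
  apply min_upto_pos. intros i _.
  destruct (potentials_pos (w - i)). apply Rmin_pos; assumption.
Qed.

Variable t : nat.
Hypothesis Ht : INR t >= INR n + Rmax 0 (T1_val m n delta p1 p2 (fs O + bd O)).

Let K : R := fs O + bd O + 2 * alpha * INR n + 2 * alpha * INR t.

Lemma K_bounds : 0 < fs O + bd O <= K.
Proof.
  unfold K. pose proof (pos_INR n). pose proof (pos_INR t).
  assert (0 <= alpha * INR n) by (apply Rmult_le_pos; lra).
  assert (0 <= alpha * INR t) by (apply Rmult_le_pos; lra). lra.
Qed.

Lemma threshold_facts :
  (n <= t)%nat /\ T1_val m n delta p1 p2 (fs O + bd O) <= INR (t - n).
Proof.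
  pose proof (Rmax_l 0 (T1_val m n delta p1 p2 (fs O + bd O))).
  pose proof (Rmax_r 0 (T1_val m n delta p1 p2 (fs O + bd O))).
  assert (Htn : (n <= t)%nat) by (apply INR_le; lra).
  split; [exact Htn | rewrite minus_INR by exact Htn; lra].
Qed.

(* After the threshold, the initial pheromone has evaporated below the
   level of the inputs, so within the window t..t+n every load is at most
   4K/(1 - delta). *)
Lemma pair_load_window (i j u : nat) : (i < m)%nat -> (j < n)%nat ->
  (t <= u <= t + n)%nat -> pair_load i j u <= 4 * K / (1 - delta).
Proof.
  intros Hi Hj Hu. pose proof K_bounds as [Hc HcK].
  assert (Hinput : forall v, (v <= t + n)%nat -> fs v + bd v <= K).
  { intros v Hv. rewrite Hfs, Hbd. unfold K.
    apply le_INR in Hv. rewrite plus_INR in Hv.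
    assert (alpha * INR v <= alpha * (INR t + INR n)) by (apply Rmult_le_compat_l; lra).
    lra. }
  assert (Hgeo := geometric_load_bound delta (2 * K) (fun v => p1 v i + p2 v j)
                    (pair_load i j) (t + n) Hdelta ltac:(lra)
                    (fun v => pair_load_decay i j v Hi Hj)).
  specialize (Hgeo ltac:(intros v Hv; pose proof (pair_load_bounds i j v Hi Hj);
                          pose proof (Hinput v Hv); lra) u ltac:(lia)).
  destruct threshold_facts as [_ HT1].
  assert (Hdecay1 : delta ^ u * p1 O i <= fs O + bd O).
  { apply initial_level_decay with (t - n)%nat; try lra; [apply Hp1, Hi | | lia].
    eapply Rle_trans; [apply T1_val_ge_edge1, Hi | exact HT1]. }
  assert (Hdecay2 : delta ^ u * p2 O j <= fs O + bd O).
  { apply initial_level_decay with (t - n)%nat; try lra; [apply Hp2, Hj | | lia].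
    eapply Rle_trans; [apply T1_val_ge_edge2, Hj | exact HT1]. }
  assert (HK : 2 * K <= 2 * K / (1 - delta)).
  { apply Rmult_le_reg_r with (1 - delta); [lra|].
    replace (2 * K / (1 - delta) * (1 - delta)) with (2 * K) by (field; lra). nra. }
  replace (4 * K / (1 - delta)) with (2 * K / (1 - delta) + 2 * K / (1 - delta)) by (field; lra).
  simpl in Hgeo. lra.
Qed.

Lemma potential_growth (u : nat) : (t <= u <= t + n - 1)%nat ->
  (1 + alpha * (1 - delta) / (6 * K)) * r_min m n p1 p2 u
    <= Rmin (r_ss1 p1 p2 (S u)) (r_d1d m n p1 p2 (S u)).
Proof.
  intros Hu. destruct threshold_facts as [Htn _]. pose proof K_bounds as [Hc HcK].
  pose proof (r_min_pos u) as Hrho.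
  destruct (r_min_le u O ltac:(lia)) as [Hs0 Hd0]. rewrite Nat.sub_0_r in Hs0, Hd0.
  destruct (r_min_le u (m - 1) ltac:(lia)) as [Hs1 Hd1].
  destruct (r_min_le u (n - 1) ltac:(lia)) as [Hs2 Hd2].
  apply Rmin_glb.
  - eapply Rle_trans; [apply (gain_lower_bound _ _ (pair_load O O u)) |].
    all: try lra.
    + apply pair_load_bounds; lia.
    + apply pair_load_window; lia.
    + apply ratio_step_source; lia || assumption.
  - eapply Rle_trans; [apply (gain_lower_bound _ _ (pair_load (m - 1) (n - 1) u)) |].
    all: try lra.
    + apply pair_load_bounds; lia.
    + apply pair_load_window; lia.
    + apply ratio_step_dest; lia || assumption.
Qed.
End LinearInputs.

Theorem mainTheorem15
  (m n : nat) (delta alpha : R) (l1 l2 : nat -> R) (fs bd : nat -> R)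
  (p1 p2 f1 f2 b1 b2 : nat -> nat -> R)
  (Hm : (1 <= m)%nat) (Hmn : (m < n)%nat)
  (Hdelta : 0 < delta < 1)
  (Hdyn : two_path_dynamics m n delta l1 l2 fs bd p1 p2 f1 f2 b1 b2)
  (Hl1 : forall i, (1 <= i <= m - 1)%nat -> l1 i = 0)
  (Hl2 : forall j, (1 <= j <= n - 1)%nat -> l2 j = 0)
  (Hp1 : forall i, (i < m)%nat -> 0 < p1 O i)
  (Hp2 : forall j, (j < n)%nat -> 0 < p2 O j)
  (Halpha : 0 < alpha) (Hfs0 : 0 < fs O) (Hbd0 : 0 < bd O)
  (Hfs : forall t, fs t = fs O + alpha * INR t)
  (Hbd : forall t, bd t = bd O + alpha * INR t)
  (Hf1 : forall i, (1 <= i <= m - 1)%nat -> 0 <= f1 O i <= fs O)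
  (Hb1 : forall i, (1 <= i <= m - 1)%nat -> 0 <= b1 O i <= bd O)
  (Hf2 : forall j, (1 <= j <= n - 1)%nat -> 0 <= f2 O j <= fs O)
  (Hb2 : forall j, (1 <= j <= n - 1)%nat -> 0 <= b2 O j <= bd O) :
  forall t : nat,
    INR t >= INR (Nat.max m n) + Rmax 0 (T1_val m n delta p1 p2 (fs O + bd O)) ->
    r_min m n p1 p2 (t + Nat.max m n) >=
      (1 + alpha * (1 - delta) /
             (6 * (fs O + bd O + 2 * alpha * INR (Nat.max m n) + 2 * alpha * INR t)))
      * r_min m n p1 p2 t.
Proof.
  intros t Ht.
  assert (HL : Nat.max m n = n) by lia. rewrite HL in Ht |- *.
  set (g w := Rmin (r_ss1 p1 p2 w) (r_d1d m n p1 p2 w)).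
  assert (Hwin : forall w, r_min m n p1 p2 w = min_upto (fun i => g (w - i)%nat) (n - 1))
    by (intro w; unfold r_min; rewrite HL; reflexivity).
  rewrite !Hwin. replace (t + n)%nat with (t + S (n - 1))%nat by lia.
  apply Rle_ge, window_min_growth.
  - pose proof (K_bounds n alpha fs bd Halpha Hfs0 Hbd0 t).
    apply Rle_mult_inv_pos; [apply Rmult_le_pos |]; lra.
  - intro w. unfold g.
    destruct (potentials_pos m n delta alpha l1 l2 fs bd p1 p2 f1 f2 b1 b2 Hm Hmn Hdelta Hdyn
                Hl1 Hl2 Hp1 Hp2 Halpha Hfs0 Hbd0 Hfs Hbd Hf1 Hb1 Hf2 Hb2 w).
    apply Rlt_le, Rmin_pos; assumption.
  - intros u Hu. rewrite <- Hwin.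
    apply (potential_growth m n delta alpha l1 l2 fs bd p1 p2 f1 f2 b1 b2 Hm Hmn Hdelta Hdyn
             Hl1 Hl2 Hp1 Hp2 Halpha Hfs0 Hbd0 Hfs Hbd Hf1 Hb1 Hf2 Hb2 t Ht). lia.
Qed.
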